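(* Let $\mathcal{M}$ be an oriented $4$-dimensional manifold endowed with a Lorentzian metric $g$ of signature $(-+++)$, let $\Psi=(\Psi^1,\Psi^2,\Psi^3)\colon\mathcal{M}\to V\simeq\mathbb{R}^3$ be smooth, and let $\mathcal{W}\subset\mathcal{M}$ be a region on which $\Psi$ is a submersion and such that $\ker T_m\Psi$ is timelike for every $m\in\mathcal{W}$. Define on $\mathcal{W}$ the vector field $\boldsymbol{W}$ by $i_{\boldsymbol{W}}\mathrm{vol}_g=\mathrm{d}\Psi^1\wedge\mathrm{d}\Psi^2\wedge\mathrm{d}\Psi^3$, the unit timelike vector field $\boldsymbol{U}=\boldsymbol{W}/\sqrt{-g(\boldsymbol{W},\boldsymbol{W})}$, $\boldsymbol{U}^\flat=g\boldsymbol{U}$, $\boldsymbol{E}^I=\mathrm{d}\Psi^I$, and the vector fields $\boldsymbol{E}_1,\boldsymbol{E}_2,\boldsymbol{E}_3$ characterized by $\boldsymbol{U}^\flat(\boldsymbol{E}_J)=0$ and $\mathrm{d}\Psi^I(\boldsymbol{E}_J)=\delta^I_J$. Then the frame $\mathcal{F}_{\mathrm{rest}}=(\boldsymbol{U},\boldsymbol{E}_1,\boldsymbol{E}_2,\boldsymbol{E}_3)$ defined on $\mathcal{W}$ and its dual coframe $\mathcal{F}^\star_{\mathrm{rest}}=(-\boldsymbol{U}^\flat,\boldsymbol{E}^1,\boldsymbol{E}^2,\boldsymbol{E}^3)$ depend only on the punctual value of $g$ and on the first-order jet of $\Psi$. Moreover, for every orientation-preserving local diffeomorphism $\varphi$ of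 $\mathcal{W}$, \[ \varphi^{*}\mathcal{F}_{\mathrm{rest}}(g,\Psi,T\Psi)=\mathcal{F}_{\mathrm{rest}}(\varphi^{*}g,\varphi^{*}\Psi,\varphi^{*}T\Psi),\qquad \varphi^{*}\mathcal{F}^\star_{\mathrm{rest}}(g,\Psi,T\Psi)=\mathcal{F}^\star_{\mathrm{rest}}(\varphi^{*}g,\varphi^{*}\Psi,\varphi^{*}T\Psi), \] i.e. the frame and coframe are general covariant.
   Context: $\mathrm{vol}_g$ is the Riemannian volume form of $g$ determined by the fixed orientation (equal to $v^0\wedge v^1\wedge v^2\wedge v^3$ for the dual of any direct $g$-orthonormal basis). Pullbacks by a local diffeomorphism $\varphi$: $\varphi^*g=(T\varphi)^\star(g\circ\varphi)T\varphi$, $\varphi^*\Psi=\Psi\circ\varphi$, $(\varphi^*\boldsymbol{X})_m=(T_m\varphi)^{-1}\boldsymbol{X}_{\varphi(m)}$ for vector fields, $(\varphi^*\alpha)_m=(T_m\varphi)^\star\alpha_{\varphi(m)}$ for covector fields. A subspace is timelike if $g$ restricted to it is negative definite. *)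

From Stdlib Require Import ClassicalEpsilon.
From mathcomp Require Import all_boot all_algebra.
From mathcomp Require Import reals.
Set Implicit Arguments. Unset Strict Implicit. Unset Printing Implicit Defensive.
Import GRing.Theory Num.Theory.
Local Open Scope ring_scope.

(* Everything is expressed at one point m of W, in a coordinate basis of T_m M
   (coordinates x^0..x^3, chosen direct for the fixed orientation).
   - g : 'M_4 is the matrix of g_m,
   - L : 'M_(3,4) is T_m Psi (row I = dPsi^I at m). *)

Section Defs.
Variable R : realType.

Definition bil (g : 'M[R]_4) (u v : 'cV[R]_4) : R := (u^T *m g *m v) 0 0.

Definition eta : 'M[R]_4 := \matrix_(i, j) (if i == j then (if i == 0 :> nat then -1 else 1) else 0).

Definition lorentzian (g : 'M[R]_4) : Prop :=
  g^T = g /\ exists B : 'M[R]_4, B \in unitmx /\ B^T *m g *m B = eta.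

Definition col4 (a b c d : 'cV[R]_4) : 'M[R]_4 :=
  \matrix_(i, j) ([:: a; b; c; d]`_j) i 0.

(* Riemannian volume form of g for the fixed (coordinate) orientation:
   vol_g = sqrt |det g| dx^0 /\ dx^1 /\ dx^2 /\ dx^3 *)
Definition volg (g : 'M[R]_4) (a b c d : 'cV[R]_4) : R :=
  Num.sqrt `|\det g| * \det (col4 a b c d).

(* (dPsi^1 /\ dPsi^2 /\ dPsi^3)(v1,v2,v3) = det [dPsi^I (v_J)] *)
Definition wedge3 (L : 'M[R]_(3,4)) (v1 v2 v3 : 'cV[R]_4) : R :=
  \det (\matrix_(I < 3, J < 3) (L *m [:: v1; v2; v3]`_J) I 0).

Definition Wvec (g : 'M[R]_4) (L : 'M[R]_(3,4)) : 'cV[R]_4 :=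
  epsilon (inhabits 0)
    (fun w => forall v1 v2 v3, volg g w v1 v2 v3 = wedge3 L v1 v2 v3).

Definition Uvec g L : 'cV[R]_4 :=
  (Num.sqrt (- bil g (Wvec g L) (Wvec g L)))^-1 *: Wvec g L.

Definition Uflat g L : 'rV[R]_4 := (Uvec g L)^T *m g.

Definition Emat g L : 'M[R]_(4,3) :=
  epsilon (inhabits 0)
    (fun E => Uflat g L *m E = 0 /\ L *m E = 1%:M).

Definition frame_rest g L : 'M[R]_(4, 1 + 3) := row_mx (Uvec g L) (Emat g L).

Definition coframe_rest g L : 'M[R]_(1 + 3, 4) := col_mx (- Uflat g L) L.

End Defs.

(* At a point, W is the vector w with  sqrt|det g| * det [w | V] = det (L V)  for
   every 4x3 matrix V.  This determines w, and when rank L = 3 a solution exists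
   in ker L.  Under a change of basis A with det A > 0 both sides of the identity
   scale by det A, so W pulls back to A^-1 W; normalising, lowering the index
   with g and solving the linear conditions defining the E_J then commute with A
   as well.  Timelikeness of ker L gives U^flat(U) = -1, so U^flat is independent
   of the rows of L: this makes E well defined and the coframe dual to the frame. *)

From mathcomp Require Import all_boot all_order all_algebra.
From mathcomp Require Import reals.
From Stdlib Require Import ClassicalEpsilon.
Import Order.TTheory GRing.Theory Num.Theory.
Local Open Scope ring_scope.
Set Implicit Arguments. Unset Strict Implicit. Unset Printing Implicit Defensive.

Lemma epsilon_unique_eq (T : Type) (x0 : T) (P : T -> Prop) (x : T) :
  P x -> (forall y, P y -> y = x) -> epsilon (inhabits x0) P = x.
Proof. by move=> Px uniqP; apply: uniqP; apply: epsilon_spec; exists x. Qed.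

Section ColumnDeterminant.
Variables (F : fieldType) (n : nat).

Lemma det_row_mx_e0 (u : 'cV[F]_(1 + n)) :
  \det (row_mx u (col_mx 0 1%:M) : 'M_(1 + n)) = u 0 0.
Proof.
rewrite -[u]vsubmxK -block_mxEh det_lblock det1 mulr1 det_mx11.
by rewrite mxE vsubmxK; congr (u _ _); apply/val_inj.
Qed.

Lemma det_row_mx_scalar_e0 (k : F) (X : 'M[F]_(1 + n, n)) :
  \det (row_mx (col_mx k%:M 0) X : 'M_(1 + n)) = k * \det (dsubmx X).
Proof. by rewrite -[X]vsubmxK -block_mxEh det_ublock det_scalar1 col_mxKd. Qed.

Lemma col_det_row_mx_inj (w w' : 'cV[F]_(1 + n)) :
  (forall V : 'M_(1 + n, n), \det (row_mx w V : 'M_(1 + n)) = \det (row_mx w' V : 'M_(1 + n))) ->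
  w = w'.
Proof.
move=> eq_det; apply/matrixP => i j; rewrite (ord1 j).
(* Coordinate i of u is det [u | V] up to a fixed factor, for V read off a transposition matrix. *)
pose P : 'M[F]_(1 + n) := perm_mx (perm.tperm 0 i).
have uP : P \in unitmx by exact: unitmx_perm.
suff coord_i u : (P *m u) 0 0 = \det P * \det (row_mx u (invmx P *m col_mx 0 1%:M) : 'M_(1 + n)).
  by have := coord_i w; rewrite eq_det -coord_i -!row_permE !mxE perm.tpermL.
by rewrite -det_mulmx mul_mx_row mulKVmx // det_row_mx_e0.
Qed.
Lemma exists_row_notin_submx (m r : nat) (L : 'M[F]_(r, m)) :
  (\rank L < m)%N -> exists a : 'rV_m, ~~ (a <= L)%MS.
Proof.
move=> rankL; have /row_subPn[i notin_i] : ~~ (1%:M <= L)%MS.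
  by rewrite sub1mx /row_full neq_ltn rankL.
by exists (row i 1%:M).
Qed.

Lemma col_mx_unitmx (a : 'rV[F]_(1 + n)) (L : 'M_(n, 1 + n)) :
  \rank L = n -> ~~ (a <= L)%MS -> (col_mx a L : 'M_(1 + n)) \in unitmx.
Proof.
move=> rankL a_notin; rewrite -row_free_unit /row_free -(addsmxE a L).1.
have := ltn_leqif (mxrank_leqif_sup (addsmxSr a L)).
rewrite addsmx_sub submx_refl andbT a_notin rankL => rank_gt.
by rewrite eqn_leq rank_leq_col rank_gt.
Qed.

Lemma exists_det_row_mx_dual (k : F) (L : 'M[F]_(n, 1 + n)) : k != 0 -> \rank L = n ->
  exists w : 'cV_(1 + n), [/\ w != 0, L *m w = 0 &
    forall V : 'M_(1 + n, n), k * \det (row_mx w V : 'M_(1 + n)) = \det (L *m V)].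
Proof.
move=> k_neq0 rankL.
have [a a_notin] : exists a : 'rV_(1 + n), ~~ (a <= L)%MS.
  by apply: exists_row_notin_submx; rewrite rankL addnC addn1.
have uK := col_mx_unitmx rankL a_notin.
set K : 'M_(1 + n) := col_mx a L in uK *.
have detK_neq0 : \det K != 0 by rewrite -unitfE -unitmxE.
set s := \det K / k.
have s_neq0 : s != 0 by rewrite mulf_neq0 // invr_eq0.
set w := invmx K *m col_mx s%:M 0.
have Kw : K *m w = col_mx s%:M 0 by rewrite mulKVmx.
have LM M : L *m M = dsubmx (K *m M) :> 'M_(n, _) by rewrite mul_col_mx col_mxKd.
exists w; split.
- apply: contraNneq s_neq0 => w0.
  move: Kw; rewrite w0 mulmx0 => /(congr1 (fun M => usubmx M 0 0)).
  by rewrite col_mxKu !mxE /= mulr1n => <-.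
- by rewrite LM Kw col_mxKd.
- move=> V; apply: (mulfI detK_neq0).
  rewrite mulrCA -det_mulmx mul_mx_row Kw det_row_mx_scalar_e0 -LM /s.
  by rewrite mulrA [k * _]mulrCA divff // mulr1.
Qed.

Lemma eq_invmx_col_mx (a : 'rV[F]_(1 + n)) (L : 'M_(n, 1 + n)) (E : 'M_(1 + n, n)) :
  (col_mx a L : 'M_(1 + n)) \in unitmx ->
  E = invmx (col_mx a L) *m col_mx 0 1%:M <-> a *m E = 0 /\ L *m E = 1%:M.
Proof.
move=> uK; split=> [-> | [aE LE]].
  by apply/eq_col_mx; rewrite -mul_col_mx mulKVmx.
by rewrite -[E](mulKmx uK) mul_col_mx aE LE.
Qed.

End ColumnDeterminant.

Section RestFrame.
Variable R : realType.
Implicit Types (g A : 'M[R]_4) (L : 'M[R]_(3, 4)) (w : 'cV[R]_4).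

Definition cols3 (v1 v2 v3 : 'cV[R]_4) : 'M[R]_(4, 3) :=
  \matrix_(i, j) ([:: v1; v2; v3]`_j) i 0.

Lemma col4E w v1 v2 v3 : col4 w v1 v2 v3 = row_mx w (cols3 v1 v2 v3).
Proof.
apply/matrixP => i j; rewrite !mxE.
by case: splitP => k ->; rewrite ?mxE // (ord1 k).
Qed.

Lemma wedge3E L v1 v2 v3 : wedge3 L v1 v2 v3 = \det (L *m cols3 v1 v2 v3).
Proof.
congr (\det _); apply/matrixP => i j; rewrite !mxE.
by apply: eq_bigr => k _; rewrite !mxE.
Qed.

Lemma cols3_col (V : 'M[R]_(4, 3)) : cols3 (col 0 V) (col 1 V) (col 2 V) = V.
Proof.
apply/matrixP => i j; rewrite !mxE.
by case: j => [[|[|[|k]]] Hk] //=; rewrite mxE; congr (V _ _); apply/val_inj.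
Qed.

Definition is_Wvec g L w :=
  forall V : 'M[R]_(4, 3), Num.sqrt `|\det g| * \det (row_mx w V) = \det (L *m V).

Lemma is_WvecP g L w :
  (forall v1 v2 v3, volg g w v1 v2 v3 = wedge3 L v1 v2 v3) <-> is_Wvec g L w.
Proof.
split=> [vol_eq V | Ww v1 v2 v3]; last by rewrite /volg col4E wedge3E Ww.
by have := vol_eq (col 0 V) (col 1 V) (col 2 V); rewrite /volg col4E wedge3E cols3_col.
Qed.

Lemma sqrt_abs_det_neq0 g : \det g != 0 -> Num.sqrt `|\det g| != 0.
Proof. by rewrite sqrtr_eq0 normr_le0. Qed.

Lemma Wvec_unique g L w : \det g != 0 -> is_Wvec g L w -> Wvec g L = w.
Proof.
move=> det_g Ww; apply: epsilon_unique_eq => [|w' /is_WvecP Ww']; first exact/is_WvecP.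
apply: col_det_row_mx_inj => V; apply: (mulfI (sqrt_abs_det_neq0 det_g)).
by rewrite Ww Ww'.
Qed.

Lemma Wvec_spec g L : \det g != 0 -> \rank L = 3%N ->
  [/\ Wvec g L != 0, L *m Wvec g L = 0 & is_Wvec g L (Wvec g L)].
Proof.
move=> det_g rankL.
have [w [w_neq0 Lw Ww]] := exists_det_row_mx_dual (sqrt_abs_det_neq0 det_g) rankL.
by rewrite (Wvec_unique det_g Ww).
Qed.

Lemma det_eta : \det (eta R) = -1.
Proof.
have -> : eta R = diag_mx (\row_(i < 4) (if i == 0 :> nat then -1 else 1)).
  by apply/matrixP => i j; rewrite !mxE; case: (i == j); rewrite ?mulr1n ?mulr0n.
by rewrite det_diag !big_ord_recl big_ord0 !mxE /= !mulr1.
Qed.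

Lemma lorentzian_det_neq0 g : lorentzian g -> \det g != 0.
Proof.
move=> [_ [B [_ BgB]]]; apply/eqP => det_g0.
have := det_eta; rewrite -BgB !det_mulmx det_g0 mulr0 mul0r => /esym/eqP.
by rewrite oppr_eq0 oner_eq0.
Qed.

Lemma bilZ g k u v : bil g (k *: u) (k *: v) = k ^+ 2 * bil g u v.
Proof. by rewrite /bil !linearZ /= -!scalemxAl scalerA mxE expr2. Qed.

Lemma bil_normalize g w : bil g w w < 0 ->
  bil g ((Num.sqrt (- bil g w w))^-1 *: w) ((Num.sqrt (- bil g w w))^-1 *: w) = -1.
Proof.
move=> w_timelike; rewrite bilZ exprVn sqr_sqrtr ?oppr_ge0 ?ltW //.
by rewrite invrN mulNr mulVf ?ltr0_neq0.
Qed.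

Lemma trmx_invmx_mulmx A (u : 'cV[R]_4) : A \in unitmx -> (invmx A *m u)^T *m A^T = u^T.
Proof. by move=> uA; rewrite -trmx_mul mulmxA mulmxV // mul1mx. Qed.

Lemma bil_pullback g A u v : A \in unitmx ->
  bil (A^T *m g *m A) (invmx A *m u) (invmx A *m v) = bil g u v.
Proof.
move=> uA; rewrite /bil !mulmxA trmx_invmx_mulmx //.
by rewrite -[_ *m A *m invmx A]mulmxA mulmxV // mulmx1.
Qed.

Lemma sqrt_abs_det_pullback g A : 0 < \det A ->
  Num.sqrt `|\det (A^T *m g *m A)| = \det A * Num.sqrt `|\det g|.
Proof.
move=> det_A; rewrite !det_mulmx det_tr mulrAC -expr2 normrM sqrtrM ?normr_ge0 //.
by rewrite normrX sqrtr_sqr normr_id (gtr0_norm det_A).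
Qed.

Lemma is_Wvec_pullback g L w A : 0 < \det A -> is_Wvec g L w ->
  is_Wvec (A^T *m g *m A) (L *m A) (invmx A *m w).
Proof.
move=> det_A Ww V; have detA_neq0 := lt0r_neq0 det_A.
have uA : A \in unitmx by rewrite unitmxE unitfE.
rewrite sqrt_abs_det_pullback // -mulmxA -Ww.
rewrite -[row_mx _ V](mulKmx uA) mul_mx_row mulKVmx // det_mulmx det_inv.
by rewrite mulrACA mulfV // mul1r.
Qed.

Lemma EmatE g L : (col_mx (Uflat g L) L : 'M_4) \in unitmx ->
  Emat g L = invmx (col_mx (Uflat g L) L) *m col_mx 0 1%:M.
Proof.
move=> uK; apply: epsilon_unique_eq => [|E /eq_invmx_col_mx -> //].
exact/eq_invmx_col_mx.
Qed.

Section Frame.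
Variables (g : 'M[R]_4) (L : 'M[R]_(3, 4)).
Hypotheses (det_g : \det g != 0) (rankL : \rank L = 3%N).
Hypothesis timelike : forall v, L *m v = 0 -> v != 0 -> bil g v v < 0.

Lemma L_Uvec : L *m Uvec g L = 0.
Proof. by have [_ LW _] := Wvec_spec det_g rankL; rewrite -scalemxAr LW scaler0. Qed.

Lemma Uflat_Uvec : Uflat g L *m Uvec g L = -1%:M.
Proof.
have [W_neq0 LW _] := Wvec_spec det_g rankL.
have U_unit : bil g (Uvec g L) (Uvec g L) = -1 := bil_normalize (timelike LW W_neq0).
by rewrite [LHS]mx11_scalar -[_ 0 0]/(bil g _ _) U_unit raddfN.
Qed.

Lemma col_mx_Uflat_unitmx : (col_mx (Uflat g L) L : 'M_4) \in unitmx.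
Proof.
apply: col_mx_unitmx rankL _; apply/negP => /submxP[D UD].
have := Uflat_Uvec; rewrite UD -mulmxA L_Uvec mulmx0 => /matrixP/(_ 0 0).
by rewrite !mxE /= mulr1n => /eqP; rewrite eq_sym oppr_eq0 oner_eq0.
Qed.

Lemma Emat_spec : Uflat g L *m Emat g L = 0 /\ L *m Emat g L = 1%:M.
Proof. exact/(eq_invmx_col_mx _ col_mx_Uflat_unitmx)/EmatE/col_mx_Uflat_unitmx. Qed.

Lemma coframe_frame_rest : coframe_rest g L *m frame_rest g L = 1%:M.
Proof.
have [UE LE] := Emat_spec.
rewrite mul_col_row !mulNmx Uflat_Uvec opprK UE oppr0 L_Uvec LE.
by rewrite -scalar_mx_block.
Qed.

Section Pullback.
Variable A : 'M[R]_4.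
Hypothesis det_A : 0 < \det A.

Let detA_neq0 : \det A != 0 := lt0r_neq0 det_A.
Let uA : A \in unitmx. Proof. by rewrite unitmxE unitfE. Qed.

Lemma Wvec_pullback : Wvec (A^T *m g *m A) (L *m A) = invmx A *m Wvec g L.
Proof.
have [_ _ Ww] := Wvec_spec det_g rankL.
apply: Wvec_unique (is_Wvec_pullback det_A Ww).
by rewrite !det_mulmx det_tr !mulf_neq0.
Qed.

Lemma Uvec_pullback : Uvec (A^T *m g *m A) (L *m A) = invmx A *m Uvec g L.
Proof. by rewrite /Uvec Wvec_pullback bil_pullback // scalemxAr. Qed.

Lemma Uflat_pullback : Uflat (A^T *m g *m A) (L *m A) = Uflat g L *m A.
Proof.
by rewrite /Uflat Uvec_pullback !mulmxA trmx_invmx_mulmx.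
Qed.

Lemma Emat_pullback : Emat (A^T *m g *m A) (L *m A) = invmx A *m Emat g L.
Proof.
have uKA : (col_mx (Uflat (A^T *m g *m A) (L *m A)) (L *m A) : 'M_4) \in unitmx.
  by rewrite Uflat_pullback -mul_col_mx unitmx_mul col_mx_Uflat_unitmx uA.
rewrite (EmatE uKA); apply/esym/eq_invmx_col_mx => //.
by rewrite Uflat_pullback !mulmxA !mulmxK //; exact: Emat_spec.
Qed.

End Pullback.
End Frame.

End RestFrame.

Theorem theorem2p6 (R : realType) (g : 'M[R]_4) (L : 'M[R]_(3,4)) (A : 'M[R]_4) :
  lorentzian g ->
  \rank L = 3%N ->
  (forall v : 'cV[R]_4, L *m v = 0 -> v != 0 -> bil g v v < 0) ->
  A \in unitmx -> 0 < \det A ->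
  coframe_rest g L *m frame_rest g L = 1%:M /\
  frame_rest (A^T *m g *m A) (L *m A) = invmx A *m frame_rest g L /\
  coframe_rest (A^T *m g *m A) (L *m A) = coframe_rest g L *m A.
Proof.
move=> /lorentzian_det_neq0 det_g rankL timelike _ det_A.
split; first exact: coframe_frame_rest.
rewrite /frame_rest /coframe_rest Uvec_pullback // Uflat_pullback // Emat_pullback //.
by rewrite mul_mx_row mul_col_mx mulNmx.
Qed.
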